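(* For all integers $L,M\ge 0$, $$\sum_{i,j\in\mathbb Z}(-1)^{i+j}q^{\binom{i+j+1}{2}}\begin{bmatrix}2L+1\\ L-i\end{bmatrix}_q\begin{bmatrix}2M+1\\ M-j\end{bmatrix}_q=-(q;q)_{2L+1}\,\delta_{L,M}.$$
   Context: $q$ is a complex number with $|q|<1$ (or a formal variable). $(a;q)_n=\prod_{j=0}^{n-1}(1-aq^j)$ for $n\ge0$ (empty product $=1$), and $(q;q)_n$ is also written $(q)_n$. The Gaussian binomial is $\begin{bmatrix}n+m\\ n\end{bmatrix}_q=\frac{(q)_{n+m}}{(q)_n(q)_m}$ if $n,m$ are nonnegative integers and $0$ otherwise; hence only finitely many terms of the sum are nonzero. $\binom{x}{2}=x(x-1)/2$. $\delta_{L,M}$ is the Kronecker delta. *)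

From HB Require Import structures.
From mathcomp Require Import all_boot all_order all_algebra.
Set Implicit Arguments. Unset Strict Implicit. Unset Printing Implicit Defensive.
Import Order.TTheory GRing.Theory Num.Theory.
Local Open Scope ring_scope.

Definition qpoch (R : pzRingType) (a q : R) (n : nat) : R :=
  \prod_(j < n) (1 - a * q ^+ j).

Definition gauss (R : fieldType) (q : R) (N K : int) : R :=
  if (0 <= K) && (K <= N) then
    qpoch q q (absz N) / (qpoch q q (absz K) * qpoch q q (absz (N - K)%R))
  else 0.

(* binom(x,2) = x(x-1)/2 for an integer x; always a natural number. *)
Definition binom2z (x : int) : nat := (absz (x * (x - 1))%R %/ 2)%N.

Definition zsum (R : nmodType) (N : nat) (F : int -> R) : R :=
  \sum_(k < (N.*2).+1) F (k%:Z - N%:Z).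

(* On its support the Gaussian binomial [2L+1, L-i] agrees with the
   q-binomial coefficient qbin (2L+1) k, k = L - i, defined by q-Pascal's rule.
   For fixed j the sum over i is therefore, up to the sign (-1)^(L+j), the
   alternating sum
       altsum n d = sum_k (-1)^k q^binom(d-k,2) qbin n k
   at n = 2L+1, d = L+j+1.  Pascal's rule yields the recursion
   altsum (n+1) d = (1 - q^(n+1-d)) altsum n d, a form of the q-binomial
   theorem, so altsum n d = 0 for 1 <= d <= n and altsum n 0 = (q;q)_n.
   Summing then over j = M - t, 0 <= t <= 2M+1, every term has
   d = L+M+1-t in [1, 2L+1] when M <= L, except t = 2M+1 where d = L-M; this
   leaves -(q;q)_{2L+1} if L = M and 0 otherwise.  The case L < M follows from
   the symmetry of the double sum in (L, i) <-> (M, j). *)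

From HB Require Import structures.
From mathcomp Require Import all_boot all_order all_algebra.
From mathcomp Require Import zify ring.
Import Order.TTheory GRing.Theory Num.Theory.
Local Open Scope ring_scope.

Lemma binom2zS (x : int) : (binom2z (x + 1))%:Z = (binom2z x)%:Z + x.
Proof. rewrite /binom2z; nia. Qed.

Lemma signz_subn (R : fieldType) (a : int) (t : nat) :
  (-1 : R) ^ (a - t%:Z) = (-1) ^ a * (-1) ^+ t.
Proof. by rewrite expfzDr ?oppr_eq0 ?oner_eq0 // -exprnN invr_sign. Qed.

Section QBinomial.
Context {R : comPzRingType} (q : R).

Fixpoint qbin (n k : nat) : R :=
  match n, k with
  | _, 0 => 1
  | 0, _.+1 => 0
  | n'.+1, k'.+1 => qbin n' k'.+1 + q ^+ (n' - k') * qbin n' k'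
  end.

Lemma qbin0 n : qbin n 0 = 1. Proof. by case: n. Qed.

Lemma qbin_gt n k : (n < k)%N -> qbin n k = 0.
Proof. by elim: n k => [|n IH] [|k] //= hk; rewrite !IH ?mulr0 ?addr0 // ltnW. Qed.

Lemma qbinn n : qbin n n = 1.
Proof. by elim: n => //= n ->; rewrite qbin_gt // subnn mulr1 add0r. Qed.

Lemma qpoch0 : qpoch q q 0 = 1.
Proof. by rewrite /qpoch big_ord0. Qed.

Lemma qpochS n : qpoch q q n.+1 = qpoch q q n * (1 - q ^+ n.+1).
Proof. by rewrite /qpoch big_ord_recr /= exprS. Qed.

Lemma qbin_qpoch {n k : nat} : (k <= n)%N ->
  qbin n k * qpoch q q k * qpoch q q (n - k) = qpoch q q n.
Proof.
elim: n k => [|n IH] [|k] //= hk; rewrite ?qpoch0 ?qbin0 ?mulr1 ?mul1r // subSS.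
have [kn|] := ltnP k n; last first.
  move=> nk; have -> : k = n by lia.
  by rewrite qbin_gt // qbinn subnn qpoch0 !mulr1 add0r mul1r.
(* Pascal's rule combines the formulas for (n, k+1) and (n, k). *)
have e1 := IH k.+1 kn; have e2 := IH k (ltnW kn).
have nk : (n - k = (n - k.+1).+1)%N by lia.
rewrite nk in e2 *; rewrite !qpochS in e1 e2 *.
have -> : q ^+ n.+1 = q ^+ (n - k.+1).+1 * q ^+ k.+1.
  by rewrite -exprD; congr (_ ^+ _); lia.
set Q := q ^+ (n - k.+1).+1 in e2 *; set P := qpoch q q n in e1 e2 *.
have -> : P * (1 - Q * q ^+ k.+1) = P * (1 - Q) + Q * (1 - q ^+ k.+1) * P by ring.
by rewrite -{1}e1 -e2; ring.
Qed.

(* The alternating sum sum_k (-1)^k q^binom(d-k,2) [n, k]; by the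
   q-binomial theorem it equals q^binom(d,2) (q^(1-d); q)_n. *)
Definition altsum (n : nat) (d : int) : R :=
  \sum_(k < n.+1) (-1) ^+ k * q ^+ binom2z (d - k%:Z) * qbin n k.

Lemma altsum_exponent {n i e : nat} {d : int} : (i <= n)%N -> n.+1%:Z = d + e%:Z ->
  (binom2z (d - i.+1%:Z) + (n - i) = binom2z (d - i%:Z) + e)%N.
Proof.
move=> hi hnde; have := binom2zS (d - i.+1%:Z).
have -> : d - i.+1%:Z + 1 = d - i%:Z by lia.
lia.
Qed.

(* Pascal's rule splits altsum (n+1) d into altsum n d and a shifted copy
   equal to -q^e altsum n d. *)
Lemma altsum_rec n d e : n.+1%:Z = d + e%:Z -> altsum n.+1 d = (1 - q ^+ e) * altsum n d.
Proof.
move=> hnde.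
have low : altsum n d = \sum_(k < n.+2) (-1) ^+ k * q ^+ binom2z (d - k%:Z) * qbin n k.
  by rewrite [RHS]big_ord_recr /= qbin_gt // mulr0 addr0.
have high : \sum_(i < n.+1) (-1) ^+ i.+1 * q ^+ binom2z (d - i.+1%:Z)
              * (q ^+ (n - i) * qbin n i) = - (q ^+ e * altsum n d).
  rewrite /altsum mulr_sumr -sumrN; apply: eq_bigr => i _.
  have pow : q ^+ binom2z (d - i.+1%:Z) * q ^+ (n - i) = q ^+ e * q ^+ binom2z (d - i%:Z).
    by rewrite -!exprD (altsum_exponent (ltnSE (ltn_ord i)) hnde) addnC.
  transitivity (- ((-1) ^+ i * (q ^+ binom2z (d - i.+1%:Z) * q ^+ (n - i)) * qbin n i)).
    by rewrite exprS; ring.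
  by rewrite pow; ring.
rewrite mulrBl mul1r -high low /altsum big_ord_recl [X in _ = X + _]big_ord_recl.
rewrite -addrA !qbin0; congr (_ + _).
rewrite -big_split; apply: eq_bigr => i _.
by rewrite lift0 /= -mulrDr.
Qed.

(* Hence altsum n d vanishes for 1 <= d <= n: the factor 1 - q^0 occurs. *)
Lemma altsum_vanish n (d : nat) : (1 <= d <= n)%N -> altsum n d%:Z = 0.
Proof.
case/andP=> d_gt0 /subnKC <-; elim: (n - d)%N => [|t IH].
  by rewrite addn0 -(prednK d_gt0) (altsum_rec _ _ 0) ?subrr ?mul0r // addr0 prednK.
by rewrite addnS (altsum_rec _ _ t.+1) ?IH ?mulr0 // -PoszD addnS.
Qed.

Lemma altsum0 n : altsum n 0 = qpoch q q n.
Proof.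
elim: n => [|n IH]; first by rewrite /altsum big_ord1 qpoch0 /= expr0 !mul1r.
by rewrite (altsum_rec _ _ n.+1) ?add0r // IH qpochS mulrC.
Qed.
End QBinomial.

Lemma zsum_window {V : nmodType} {N : nat} (n c : nat) {f : int -> V} :
  (c <= N)%N -> (n <= N + c)%N ->
  (forall i, f i != 0 -> 0 <= c%:Z - i <= n%:Z) ->
  zsum N f = \sum_(k < n.+1) f (c%:Z - k%:Z).
Proof.
move=> hcN hnN supp.
have vanish (k : nat) : ~~ (N + c - n <= k <= N + c)%N -> f (k%:Z - N%:Z) = 0.
  by move=> hk; apply: contraNeq hk => /supp; lia.
rewrite /zsum -(big_mkord xpredT (fun k => f (k%:Z - N%:Z))).
rewrite (@big_cat_nat _ _ _ (N + c - n)) //=; last by lia.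
rewrite (@big_cat_nat _ _ _ (N + c).+1 (N + c - n)) //=; [|lia|lia].
rewrite big1_seq ?add0r => [|k]; last first.
  by rewrite mem_index_iota => /andP[_ hk]; apply: vanish; lia.
rewrite [X in _ + X]big1_seq ?addr0 => [|k]; last first.
  by rewrite mem_index_iota => /andP[_ hk]; apply: vanish; lia.
rewrite -{1}[(N + c - n)%N]add0n big_addn.
rewrite -(big_mkord xpredT (fun k => f (c%:Z - k%:Z))) big_nat_rev.
have -> : ((N + c).+1 - (N + c - n) = n.+1)%N by lia.
by apply: eq_big_nat => i /andP[_ hi]; congr f; lia.
Qed.

Section GaussianBinomial.
Context {R : fieldType} (q : R).

Lemma gauss_support (n : nat) (K : int) : gauss q n%:Z K != 0 -> 0 <= K <= n%:Z.
Proof. by rewrite /gauss; case: ifP; rewrite ?eqxx. Qed.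

Hypothesis qpoch_neq0 : forall n, qpoch q q n != 0.

Lemma gauss_qbin (n k : nat) : (k <= n)%N -> gauss q n%:Z k%:Z = qbin q n k.
Proof.
move=> kn; rewrite /gauss lez_nat kn /= (subzn kn) !absz_nat -(qbin_qpoch q kn).
by rewrite -mulrA mulfK // mulf_neq0.
Qed.

End GaussianBinomial.

Section DoubleSum.
Context {R : fieldType} (q : R).
Hypothesis qpoch_neq0 : forall n, qpoch q q n != 0.

Definition summand (L M : nat) (i j : int) : R :=
  (-1) ^ (i + j) * q ^+ binom2z (i + j + 1)
    * gauss q (2 * L + 1)%N%:Z (L%:Z - i)
    * gauss q (2 * M + 1)%N%:Z (M%:Z - j).

Definition double_sum (L M N : nat) : R :=
  zsum N (fun i => zsum N (fun j => summand L M i j)).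

Lemma double_sumC L M N : double_sum L M N = double_sum M L N.
Proof.
rewrite /double_sum /zsum exchange_big; apply: eq_bigr => a _; apply: eq_bigr => b _.
by rewrite /summand (addrC (_ - _)) mulrAC.
Qed.

Lemma inner_sum (L N : nat) (j : int) : (L < N)%N ->
  zsum N (fun i => (-1) ^ (i + j) * q ^+ binom2z (i + j + 1)
                     * gauss q (2 * L + 1)%N%:Z (L%:Z - i))
  = (-1) ^ (L%:Z + j) * altsum q (2 * L + 1) (L%:Z + j + 1).
Proof.
move=> LN; rewrite (zsum_window (2 * L + 1) L); [|lia|lia|]; last first.
  by move=> i; rewrite mulf_eq0 negb_or => /andP[_ /gauss_support]; lia.
rewrite /altsum mulr_sumr; apply: eq_bigr => k _.
rewrite subKr gauss_qbin //; last by rewrite -ltnS.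
have -> : L%:Z - k%:Z + j = L%:Z + j - k%:Z by lia.
have -> : L%:Z + j - k%:Z + 1 = L%:Z + j + 1 - k%:Z by lia.
by rewrite signz_subn !mulrA.
Qed.

Lemma double_sum_altsum L M N : (L < N)%N -> (M < N)%N ->
  double_sum L M N = \sum_(t < (2 * M + 1).+1) (-1) ^ (L%:Z + (M%:Z - t%:Z))
      * altsum q (2 * L + 1) (L%:Z + (M%:Z - t%:Z) + 1) * qbin q (2 * M + 1) t.
Proof.
move=> LN MN.
have -> : double_sum L M N = zsum N (fun j =>
    zsum N (fun i => (-1) ^ (i + j) * q ^+ binom2z (i + j + 1)
                       * gauss q (2 * L + 1)%N%:Z (L%:Z - i))
    * gauss q (2 * M + 1)%N%:Z (M%:Z - j)).
  by rewrite /double_sum /zsum exchange_big; apply: eq_bigr => b _; rewrite mulr_suml.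
rewrite (zsum_window (2 * M + 1) M); [|lia|lia|]; last first.
  by move=> j; rewrite mulf_eq0 negb_or => /andP[_ /gauss_support]; lia.
apply: eq_bigr => t _.
by rewrite inner_sum // subKr gauss_qbin // -ltnS.
Qed.

(* Evaluation for M <= L: only the term t = 2M+1 can survive, and it does
   exactly when L = M. *)
Lemma double_sum_le L M N : (M <= L)%N -> (L < N)%N -> (M < N)%N ->
  double_sum L M N = - qpoch q q (2 * L + 1) * (L == M)%:R.
Proof.
move=> ML LN MN; rewrite double_sum_altsum // big_ord_recr big1 ?add0r => [|t _]; last first.
  have -> : L%:Z + (M%:Z - t%:Z) + 1 = (L + M + 1 - t)%N%:Z by have := ltn_ord t; lia.
  by rewrite altsum_vanish ?mulr0 ?mul0r //; have := ltn_ord t; lia.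
rewrite /= add0r qbinn mulr1.
have -> : L%:Z + (M%:Z - (2 * M + 1)%N%:Z) = (L - M)%N%:Z - 1 by lia.
rewrite subrK; have [<-|/eqP neq] := eqVneq L M.
  by rewrite subnn altsum0 exprN1 invrN1 mulN1r mulr1.
by rewrite altsum_vanish ?mulr0 //; lia.
Qed.
End DoubleSum.

Lemma qpoch_neq0_of_norm {R : numFieldType} {q : R} : `|q| < 1 ->
  forall n, qpoch q q n != 0.
Proof.
move=> hq n; apply/prodf_neq0 => j _; rewrite -exprS subr_eq0 eq_sym.
have small : `|q ^+ j.+1| < 1 by rewrite normrX exprn_ilt1.
by apply: contraTneq small => ->; rewrite normr1 ltxx.
Qed.

Theorem mainTheorem1 (R : numFieldType) (q : R) (hq : `|q| < 1) (L M : nat)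
    (N : nat) (hL : (L < N)%N) (hM : (M < N)%N) :
  zsum N (fun i => zsum N (fun j =>
     (-1) ^ (i + j) * q ^+ binom2z (i + j + 1)
       * gauss q (2 * L + 1)%N%:Z (L%:Z - i)
       * gauss q (2 * M + 1)%N%:Z (M%:Z - j)))
  = - qpoch q q (2 * L + 1) * (L == M)%:R.
Proof.
have qp := qpoch_neq0_of_norm hq.
rewrite -[LHS]/(double_sum q L M N).
have [ML|LM] := leqP M L; first exact: double_sum_le.
by rewrite double_sumC double_sum_le ?(ltnW LM) // (ltn_eqF LM) (gtn_eqF LM) !mulr0.
Qed.
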